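(* Let $F$ be a semi-safe sentence and let $c(F)$ be the set of object constants occurring in $F$. Then $\mathrm{SM}[F]$ entails $\mathit{SPP}_{c(F)}$; that is, every interpretation satisfying $\mathrm{SM}[F]$ satisfies $\mathit{SPP}_{c(F)}$.
   Context: Formulas are first-order formulas over a signature with object constants, predicate constants and equality, but no function constants of arity $>0$. The primitive connectives are $\bot,\land,\lor,\rightarrow$ and the quantifiers $\forall,\exists$; $\neg F$ abbreviates $F\rightarrow\bot$, $\top$ abbreviates $\bot\rightarrow\bot$, and $F\leftrightarrow G$ abbreviates $(F\rightarrow G)\land(G\rightarrow F)$. A sentence is a formula without free variables. Stable model operator: for a sentence $F$, let $\mathbf p=p_1,\dots,p_n$ be all predicate constants occurring in $F$ and $\mathbf u=u_1,\dots,u_n$ distinct predicate variables with matching arities. $\mathbf u\le\mathbf p$ is $\bigwedge_i\forall\mathbf x(u_i(\mathbf x)\rightarrow p_i(\mathbf x))$, $\mathbf u=\mathbf p$ is $\bigwedge_i\forall\mathbf x(u_i(\mathbf x)\leftrightarrow p_i(\mathbf x))$, and $\mathbf u<\mathbf p$ is $(\mathbf u\le\mathbf p)\land\neg(\mathbf u=\mathbf p)$. $F^*(\mathbf u)$ is defined recursively: $p_i(\mathbf t)^*=u_i(\mathbf t)$; $(t_1=t_2)^*=(t_1=t_2)$; $\bot^*=\bot$; $(G\land H)^*=G^*\land H^*$; $(G\lor H)^*=G^*\lor H^*$; $(G\rightarrow H)^*=(G^*\rightarrow H^* )\land(G\rightarrow H)$; $(\forall xG)^*=\forall xG^*$; $(\exists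 xG)^*=\exists xG^*$. Then $\mathrm{SM}[F]$ is the second-order sentence $F\land\neg\exists\mathbf u((\mathbf u<\mathbf p)\land F^*(\mathbf u))$. Restricted variables: for a quantifier-free formula $F$, the set $\mathrm{RV}(F)$ is defined by: if $F$ is atomic and an equality between two variables, $\mathrm{RV}(F)=\emptyset$; if $F$ is any other atomic formula, $\mathrm{RV}(F)$ is the set of variables occurring in $F$; $\mathrm{RV}(\bot)=\emptyset$; $\mathrm{RV}(G\land H)=\mathrm{RV}(G)\cup\mathrm{RV}(H)$; $\mathrm{RV}(G\lor H)=\mathrm{RV}(G)\cap\mathrm{RV}(H)$; $\mathrm{RV}(G\rightarrow H)=\emptyset$. An occurrence of a subformula or variable in a formula is strictly positive if it is not in the antecedent of any implication. A sentence in prenex form $Q_1x_1\cdots Q_nx_nM$ ($M$ quantifier-free, $x_i$ distinct) is semi-safe if every strictly positive occurrence of every variable $x_i$ in $M$ belongs to a subformula $G\rightarrow H$ of $M$ such that $x_i\in\mathrm{RV}(G)$. Small predicate property: for a finite set $\mathbf c$ of object constants, $\mathit{in}_{\mathbf c}(x_1,\dots,x_m)$ denotes $\bigwedge_{1\le j\le m}\bigvee_{c\in\mathbf c}x_j=c$, and $\mathit{SPP}_{\mathbf c}$ denotes the conjunction of the sentences $\forall\mathbf x(p_i(\mathbf x)\rightarrow\mathit{in}_{\mathbf c}(\mathbf x))$ over all predicate constants $p_i$ occurring in $F$ ($\mathbf x$ a list of distinct variables of the arity of $p_i$). *)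

From Stdlib Require Import List Arith.
Import ListNotations.

Inductive term : Type :=
| TVar : nat -> term
| TConst : nat -> term.

Record psym : Type := mkPsym { pname : nat; parity : nat }.

Inductive formula : Type :=
| FAtom : psym -> list term -> formula
| FEq : term -> term -> formula
| FBot : formula
| FAnd : formula -> formula -> formula
| FOr : formula -> formula -> formula
| FImp : formula -> formula -> formula
| FAll : nat -> formula -> formula
| FEx : nat -> formula -> formula.

Definition FNeg (F : formula) : formula := FImp F FBot.
Definition FTop : formula := FImp FBot FBot.
Definition FIff (F G : formula) : formula := FAnd (FImp F G) (FImp G F).

Fixpoint wf (F : formula) : Prop :=
  match F with
  | FAtom p ts => length ts = parity p
  | FEq _ _ | FBot => True
  | FAnd G H | FOr G H | FImp G H => wf G /\ wf H
  | FAll _ G | FEx _ G => wf G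
  end.

Definition term_vars (t : term) : list nat :=
  match t with TVar x => [x] | TConst _ => [] end.

Definition term_consts (t : term) : list nat :=
  match t with TVar _ => [] | TConst c => [c] end.

Fixpoint fv (F : formula) : list nat :=
  match F with
  | FAtom _ ts => flat_map term_vars ts
  | FEq t1 t2 => term_vars t1 ++ term_vars t2
  | FBot => []
  | FAnd G H | FOr G H | FImp G H => fv G ++ fv H
  | FAll x G | FEx x G => remove Nat.eq_dec x (fv G)
  end.

Definition sentence (F : formula) : Prop := fv F = [].

Fixpoint consts (F : formula) : list nat :=
  match F with
  | FAtom _ ts => flat_map term_consts ts
  | FEq t1 t2 => term_consts t1 ++ term_consts t2
  | FBot => []
  | FAnd G H | FOr G H | FImp G H => consts G ++ consts H
  | FAll _ G | FEx _ G => consts G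
  end.

Fixpoint preds (F : formula) : list psym :=
  match F with
  | FAtom p _ => [p]
  | FEq _ _ | FBot => []
  | FAnd G H | FOr G H | FImp G H => preds G ++ preds H
  | FAll _ G | FEx _ G => preds G
  end.

Fixpoint qfree (F : formula) : Prop :=
  match F with
  | FAtom _ _ | FEq _ _ | FBot => True
  | FAnd G H | FOr G H | FImp G H => qfree G /\ qfree H
  | FAll _ _ | FEx _ _ => False
  end.

Inductive quant : Type := QAll | QEx.

Definition prenex (qs : list (quant * nat)) (M : formula) : formula :=
  fold_right (fun qx G => match fst qx with
                          | QAll => FAll (snd qx) G
                          | QEx => FEx (snd qx) G end) M qs.

Fixpoint inRV (x : nat) (F : formula) : Prop :=
  match F with
  | FAtom _ ts => In x (flat_map term_vars ts)
  | FEq t1 t2 =>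
      match t1, t2 with
      | TVar _, TVar _ => False
      | _, _ => In x (term_vars t1 ++ term_vars t2)
      end
  | FBot => False
  | FAnd G H => inRV x G \/ inRV x H
  | FOr G H => inRV x G /\ inRV x H
  | FImp _ _ => False
  | FAll _ _ | FEx _ _ => False   (* not used: RV is only for q.-free formulas *)
  end.

(* [covered x M]: every strictly positive occurrence of x in M belongs to a
   subformula G -> H of M with x in RV(G). *)
Fixpoint covered (x : nat) (M : formula) : Prop :=
  match M with
  | FAtom _ ts => ~ In x (flat_map term_vars ts)
  | FEq t1 t2 => ~ In x (term_vars t1 ++ term_vars t2)
  | FBot => True
  | FAnd G H | FOr G H => covered x G /\ covered x H
  | FImp G H => inRV x G \/ covered x H
  | FAll _ G | FEx _ G => covered x G   (* not used: M is quantifier-free *)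
  end.

Definition semi_safe (qs : list (quant * nat)) (M : formula) : Prop :=
  qfree M /\ NoDup (map snd qs) /\ sentence (prenex qs M) /\
  forall x, In x (map snd qs) -> covered x M.

Section Semantics.
Variable D : Type.
Variable cI : nat -> D.
Variable pI : psym -> list D -> Prop.

Definition upd (env : nat -> D) (x : nat) (d : D) : nat -> D :=
  fun y => if Nat.eq_dec y x then d else env y.

Definition teval (env : nat -> D) (t : term) : D :=
  match t with TVar x => env x | TConst c => cI c end.

Fixpoint sat (env : nat -> D) (F : formula) : Prop :=
  match F with
  | FAtom p ts => pI p (map (teval env) ts)
  | FEq t1 t2 => teval env t1 = teval env t2
  | FBot => False
  | FAnd G H => sat env G /\ sat env H
  | FOr G H => sat env G \/ sat env H
  | FImp G H => sat env G -> sat env H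
  | FAll x G => forall d : D, sat (upd env x d) G
  | FEx x G => exists d : D, sat (upd env x d) G
  end.

(* Truth value of F*(u) where the predicate variables u are interpreted by U. *)
Fixpoint sat_star (U : psym -> list D -> Prop) (env : nat -> D) (F : formula)
  : Prop :=
  match F with
  | FAtom p ts => U p (map (teval env) ts)
  | FEq t1 t2 => teval env t1 = teval env t2
  | FBot => False
  | FAnd G H => sat_star U env G /\ sat_star U env H
  | FOr G H => sat_star U env G \/ sat_star U env H
  | FImp G H => (sat_star U env G -> sat_star U env H) /\ (sat env G -> sat env H)
  | FAll x G => forall d : D, sat_star U (upd env x d) G
  | FEx x G => exists d : D, sat_star U (upd env x d) G
  end.

Definition pleq (ps : list psym) (U P : psym -> list D -> Prop) : Prop :=
  forall p, In p ps -> forall l : list D, length l = parity p -> U p l -> P p l.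

Definition peq (ps : list psym) (U P : psym -> list D -> Prop) : Prop :=
  forall p, In p ps -> forall l : list D, length l = parity p -> (U p l <-> P p l).

Definition plt (ps : list psym) (U P : psym -> list D -> Prop) : Prop :=
  pleq ps U P /\ ~ peq ps U P.

Definition sat_SM (F : formula) : Prop :=
  forall env : nat -> D,
    sat env F /\
    ~ (exists U : psym -> list D -> Prop, plt (preds F) U pI /\ sat_star U env F).

Definition in_c (c : list nat) (l : list D) : Prop :=
  forall d, In d l -> exists k, In k c /\ d = cI k.

Definition sat_SPP (c : list nat) (F : formula) : Prop :=
  forall p, In p (preds F) ->
    forall l : list D, length l = parity p -> pI p l -> in_c c l.

End Semantics.

(* Let c = c(F) and let U restrict every predicate to the tuples of values of
   constants from c.  If some predicate held of a tuple outside c, then U < p,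
   and F*(U) would follow from F: by semi-safety, a strictly positive
   occurrence of a variable whose value is not named by a constant from c sits
   under an antecedent G with x in RV(G), and G*(U) forces the value of x to be
   named.  This contradicts SM[F]. *)
From Stdlib Require Import List Arith.
From Stdlib Require Import Classical.

Lemma consts_prenex qs M : consts (prenex qs M) = consts M.
Proof. induction qs as [|[[|] y] qs IH]; simpl; auto. Qed.

Lemma fv_prenex qs M x :
  In x (fv M) -> In x (fv (prenex qs M)) \/ In x (map snd qs).
Proof.
  induction qs as [|[q y] qs IH]; simpl; intros Hx; auto.
  destruct (IH Hx) as [Hfv|Hq]; auto.
  destruct (Nat.eq_dec x y) as [->|Hxy]; auto.
  left; destruct q; simpl; apply in_in_remove; auto.
Qed.

Lemma covered_notin_fv x M : qfree M -> ~ In x (fv M) -> covered x M.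
Proof.
  induction M; simpl; intros Hq Hx; try tauto;
    destruct Hq; rewrite in_app_iff in Hx; intuition.
Qed.

Lemma semi_safe_covered qs M : semi_safe qs M -> forall x, covered x M.
Proof.
  intros [Hq [_ [Hsent Hcov]]] x.
  destruct (in_dec Nat.eq_dec x (map snd qs)) as [Hx|Hx]; auto.
  apply covered_notin_fv; auto; intros Hfv.
  destruct (fv_prenex qs M x Hfv) as [Hfree|]; auto.
  unfold sentence in Hsent; rewrite Hsent in Hfree; destruct Hfree.
Qed.

Section SmallPredicates.
Variable D : Type.
Variable cI : nat -> D.
Variable pI : psym -> list D -> Prop.

Lemma sat_star_sat (U : psym -> list D -> Prop) env F :
  (forall p l, U p l -> pI p l) ->
  sat_star D cI pI U env F -> sat D cI pI env F.
Proof.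
  intros HU; revert env; induction F; simpl; intros env HF; firstorder.
Qed.

Variable c : list nat.

Definition named (d : D) : Prop := exists k, In k c /\ d = cI k.

Definition restrict_named (p : psym) (l : list D) : Prop :=
  pI p l /\ in_c D cI c l.

Lemma restrict_named_lt ps p l :
  In p ps -> length l = parity p -> pI p l -> ~ in_c D cI c l ->
  plt D ps restrict_named pI.
Proof.
  intros Hp Hl Hpl Hout; split.
  - intros p' _ l' _ [H _]; exact H.
  - intros Heq; apply Hout, (proj2 (Heq p Hp l Hl) Hpl).
Qed.

Lemma named_inRV (U : psym -> list D -> Prop) env x G :
  (forall p l, U p l -> in_c D cI c l) -> incl (consts G) c ->
  inRV x G -> sat_star D cI pI U env G -> named (env x).
Proof.
  intros HU; induction G; simpl; intros Hc Hx HG; try tauto.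
  - apply (HU _ _ HG), in_map_iff.
    apply in_flat_map in Hx as [[y|k] [Ht Hy]]; simpl in Hy; [|tauto].
    destruct Hy as [->|[]]; exists (TVar x); auto.
  - destruct t as [y|k], t0 as [z|m]; simpl in *; try tauto;
      destruct Hx as [<-|[]]; eexists; split; eauto; apply Hc; simpl; auto.
  - apply incl_app_inv in Hc as [Hc1 Hc2].
    destruct HG, Hx; [apply IHG1|apply IHG2]; auto.
  - apply incl_app_inv in Hc as [Hc1 Hc2].
    destruct HG, Hx; [apply IHG1|apply IHG2]; auto.
Qed.

(* The covering hypothesis is only required of variables with unnamed values:
   passing under [G -> H] discharges exactly those x with x in RV(G). *)
Lemma sat_star_restrict_qfree env M :
  qfree M -> incl (consts M) c ->
  (forall x, ~ named (env x) -> covered x M) ->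
  sat D cI pI env M -> sat_star D cI pI restrict_named env M.
Proof.
  induction M; simpl; intros Hq Hc Hcov HM; try tauto.
  - split; auto.
    intros d Hd; apply in_map_iff in Hd as [[x|k] [<- Ht]]; simpl.
    + apply NNPP; intros Hx; apply (Hcov x Hx), in_flat_map.
      exists (TVar x); simpl; auto.
    + exists k; split; auto; apply Hc, in_flat_map.
      exists (TConst k); simpl; auto.
  - apply incl_app_inv in Hc as [Hc1 Hc2].
    destruct Hq, HM; split; [apply IHM1|apply IHM2]; auto;
      intros x Hx; apply Hcov in Hx; tauto.
  - apply incl_app_inv in Hc as [Hc1 Hc2].
    destruct Hq, HM; [left; apply IHM1|right; apply IHM2]; auto;
      intros x Hx; apply Hcov in Hx; tauto.
  - apply incl_app_inv in Hc as [Hc1 Hc2].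
    destruct Hq as [Hq1 Hq2]; split; auto.
    intros HG; apply IHM2; auto.
    + intros x Hx; destruct (Hcov x Hx) as [HRV|]; auto.
      exfalso; apply Hx, (named_inRV restrict_named env x M1); auto.
      intros p l [_ H]; exact H.
    + apply HM, (sat_star_sat restrict_named); auto.
      intros p l [H _]; exact H.
Qed.

Lemma sat_star_restrict_prenex qs M :
  qfree M -> incl (consts M) c -> (forall x, covered x M) ->
  forall env, sat D cI pI env (prenex qs M) ->
  sat_star D cI pI restrict_named env (prenex qs M).
Proof.
  intros Hq Hc Hcov.
  induction qs as [|[[|] y] qs IH]; simpl; intros env HF.
  - apply sat_star_restrict_qfree; auto.
  - intros d; apply IH, HF.
  - destruct HF as [d Hd]; exists d; apply IH, Hd.
Qed.

End SmallPredicates.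

Theorem proposition1 :
  forall (qs : list (quant * nat)) (M : formula),
    wf (prenex qs M) ->
    semi_safe qs M ->
    forall (D : Type) (cI : nat -> D) (pI : psym -> list D -> Prop),
      inhabited D ->
      sat_SM D cI pI (prenex qs M) ->
      sat_SPP D cI pI (consts (prenex qs M)) (prenex qs M).
Proof.
  intros qs M _ Hsafe D cI pI [d0] HSM p Hp l Hl Hpl.
  apply NNPP; intros Hout.
  set (c := consts (prenex qs M)).
  destruct (HSM (fun _ => d0)) as [HF Hmin]; apply Hmin.
  exists (restrict_named D cI pI c); split.
  - apply (restrict_named_lt D cI pI c _ p l); auto.
  - apply sat_star_restrict_prenex; auto.
    + apply (proj1 Hsafe).
    + unfold c; rewrite consts_prenex; apply incl_refl.
    + apply (semi_safe_covered qs), Hsafe.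
Qed.
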